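(* Let $Q=(G\leftleftarrows A)$ be a multiplicative graph with semigroup of vertices $G$. Let $\mathbf k[A]$ be the vector space with basis $A$ and $\mathbf k[G]$ the semigroup algebra, and let $\phi:\mathbf k[A]\to\mathbf k[G]$, $\phi(a)=t(a)-s(a)$. Equip $\mathbf k[A]$ with the $\mathbf k[G]$-bimodule structure extending linearly the two-sided action of $G$ on $A$ given by $\mu$, equip $\mathbf k[G]$ with $\Delta_0(g)=g\otimes g$, and define $\Delta_1:\mathbf k[A]\to\mathbf k[A]\otimes\mathbf k[G]+\mathbf k[G]\otimes\mathbf k[A]$ by $\Delta_1(a)=a\otimes t(a)+s(a)\otimes a$. Then $(\mathbf k[A]\xrightarrow{\phi}\mathbf k[G])$ with these structures is a bialgebra in the Loday–Pirashvili category $\mathcal{LM}$.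
   Context: A multiplicative graph is a directed graph $(G\overset{s}{\underset{t}{\leftleftarrows}}A)$ with an associative morphism $\mu:Q\,\square\,Q\to Q$ from its Cartesian product square (vertices $G\times G$, arrows $A\times G\sqcup G\times A$); this makes $G$ a semigroup and gives left and right actions $g\cdot a=\mu(g,a)$, $a\cdot g=\mu(a,g)$ of $G$ on $A$ with $s(g\cdot a)=gs(a)$, $t(g\cdot a)=gt(a)$, $s(a\cdot g)=s(a)g$, $t(a\cdot g)=t(a)g$. Over a field $\mathbf k$ of characteristic $0$, the category $\mathcal{LM}$ has objects linear maps $U\xrightarrow{f}V$ and morphisms commutative squares, with tensor product $(U\xrightarrow{f}V)\otimes(U'\xrightarrow{f'}V')=(U\otimes V'+V\otimes U'\xrightarrow{f\otimes\mathrm{Id}+\mathrm{Id}\otimes f'}V\otimes V')$. An algebra in $\mathcal{LM}$ is $(\mathcal A\xrightarrow{f}\mathcal H)$ with $\mathcal H$ an algebra, $\mathcal A$ an $\mathcal H$-bimodule and $f$ a bimodule map. A bialgebra in $\mathcal{LM}$ is such an algebra together with a coproduct $\Delta_0$ making $\mathcal H$ a bialgebra and a two-sided coaction $\Delta_1:\mathcal A\to\mathcal A\otimes\mathcal H+\mathcal H\otimes\mathcal A$ which is an $\mathcal H$-bimodule map (with $\mathcal H$ acting on the target via $\Delta_0$) and satisfies $\Delta_0\circ f=(f\otimes\mathrm{Id}+\mathrm{Id}\otimes f)\circ\Delta_1$. *)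

(* Free vector spaces k[K] on a (choice) type K are modelled
   by multinomials' finitely supported functions {malg k[K]}. *)
From HB Require Import structures.
From mathcomp Require Import all_boot all_algebra.
From mathcomp Require Import finmap.
From mathcomp.multinomials Require Import monalg.

Set Implicit Arguments.
Unset Strict Implicit.
Unset Printing Implicit Defensive.

Import GRing.Theory.
Local Open Scope ring_scope.

(* A directed graph  s,t : A -> G  with an associative morphism        *)
(* mu : Q [] Q -> Q.  On vertices mu is  m : G -> G -> G; on the arrows *)
(* A x G (+) G x A it is given by  r a g = a.g  and  l g a = g.a.       *)
(* mu is a graph morphism (source/target compatibility) and            *)
(* associative on Q [] Q [] Q (vertices G^3, arrows A x G x G (+)      *)
(* G x A x G (+) G x G x A).                                           *)
Definition multiplicative_graph (G A : Type) (s t : A -> G)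
    (m : G -> G -> G) (l : G -> A -> A) (r : A -> G -> A) : Prop :=
  associative m /\
  (forall g a, s (l g a) = m g (s a) /\ t (l g a) = m g (t a)) /\
  (forall a g, s (r a g) = m (s a) g /\ t (r a g) = m (t a) g) /\
  (forall a g h, r (r a g) h = r a (m g h)) /\
  (forall g a h, r (l g a) h = l g (r a h)) /\
  (forall g h a, l (m g h) a = l g (l h a)).

Section FreeSpaces.
Variable k : fieldType.

Notation FV K := {malg k[K]}.

Definition bv (K : choiceType) (x : K) : FV K := << (1 : k) *g x >>.

Definition lin1 (K : choiceType) (V : lmodType k) (h : K -> V) (u : FV K) : V :=
  \sum_(x <- msupp u) u@_x *: h x.

Definition lin2 (K1 K2 : choiceType) (V : lmodType k) (h : K1 -> K2 -> V)
    (u : FV K1) (v : FV K2) : V :=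
  lin1 (fun x => lin1 (fun y => h x y) v) u.

(* k[X] (x) k[Y] is identified with k[X * Y], e_x (x) e_y = e_(x,y) *)
Definition tens (X Y : choiceType) (u : FV X) (v : FV Y) : FV (X * Y)%type :=
  lin2 (fun x y => bv (x, y)) u v.

Definition tmap (X Y X' Y' : choiceType) (F : FV X -> FV X') (H : FV Y -> FV Y')
    : FV (X * Y)%type -> FV (X' * Y')%type :=
  lin1 (fun p => tens (F (bv p.1)) (H (bv p.2))).

(* direct sum k[X] + k[Y] identified with k[X + Y]; a map out of it   *)
Definition smap (X Y : choiceType) (V : lmodType k) (F : FV X -> V) (H : FV Y -> V)
    : FV (X + Y)%type -> V :=
  lin1 (fun p => match p with inl x => F (bv x) | inr y => H (bv y) end).

(* linear map induced by a map of bases (used for canonical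
   identifications such as associativity / distributivity) *)
Definition relabel (K K' : choiceType) (phi : K -> K') : FV K -> FV K' :=
  lin1 (fun x => bv (phi x)).

Definition inl_v (X Y : choiceType) : FV X -> FV (X + Y)%type := relabel inl.
Definition inr_v (X Y : choiceType) : FV Y -> FV (X + Y)%type := relabel inr.

Definition is_linear (V W : lmodType k) (F : V -> W) : Prop :=
  forall (c : k) (u v : V), F (c *: u + v) = c *: F u + F v.

Definition is_bilinear (V1 V2 W : lmodType k) (F : V1 -> V2 -> W) : Prop :=
  (forall v, is_linear (F^~ v)) /\ (forall u, is_linear (F u)).

(* Bialgebras in the Loday--Pirashvili category LM, for objects        *)
(* (U --f--> H) with U = k[Y], H = k[X] free.                          *)
(* Tensor products: (U->H)(x)(U->H) has degree 0 part H(x)H = k[X*X]   *)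
(* and degree 1 part U(x)H + H(x)U = k[(Y*X) + (X*Y)]; the degree 1    *)
(* part of the triple tensor is k[((Y*X)*X + (X*Y)*X) + (X*X)*Y].      *)
(* Algebras are associative, not necessarily unital (G is only a       *)

Section LM.
Variables (X Y : choiceType).

Local Notation H := (FV X).
Local Notation U := (FV Y).
Local Notation HH := (FV (X * X)%type).
Local Notation Q1 := (FV ((Y * X) + (X * Y))%type).
Local Notation HHH := (FV ((X * X) * X)%type).
Local Notation T3 := (FV (((Y * X) * X + (X * Y) * X) + (X * X) * Y)%type).

Record LM_bialgebra
  (mul : H -> H -> H) (lact : H -> U -> U) (ract : U -> H -> U) (f : U -> H)
  (D0 : H -> HH) (D1 : U -> Q1) : Prop := {
  mul_bilin : is_bilinear mul;
  mul_assoc : associative mul;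
  lact_bilin : is_bilinear lact;
  ract_bilin : is_bilinear ract;
  lactM : forall h h' a, lact (mul h h') a = lact h (lact h' a);
  ractM : forall a h h', ract (ract a h) h' = ract a (mul h h');
  lract : forall h a h', ract (lact h a) h' = lact h (ract a h');
  f_lin : is_linear f;
  f_lact : forall h a, f (lact h a) = mul h (f a);
  f_ract : forall a h, f (ract a h) = mul (f a) h;
  D0_lin : is_linear D0;
  D0_coassoc : forall h,
     tmap D0 id (D0 h) =
     relabel (fun p : X * (X * X) => ((p.1, p.2.1), p.2.2)) (tmap id D0 (D0 h));
  D0_mul : forall h h',
     D0 (mul h h') =
     lin2 (fun p q : X * X => tens (mul (bv p.1) (bv q.1)) (mul (bv p.2) (bv q.2)))
          (D0 h) (D0 h');
  (* D1 is a two-sided coaction (coassociativity in degree 1) *)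
  D1_lin : is_linear D1;
  D1_coassoc : forall a : U,
     smap
       (fun w : FV (Y * X)%type =>
          relabel (fun p : ((Y * X) + (X * Y)) * X =>
                     match p with
                     | (inl (y, x), x') => inl (inl ((y, x), x'))
                     | (inr (x, y), x') => inl (inr ((x, y), x'))
                     end : ((Y * X) * X + (X * Y) * X) + (X * X) * Y)
                  (tmap D1 id w))
       (fun w : FV (X * Y)%type =>
          relabel (fun p : (X * X) * Y => inr p : ((Y * X) * X + (X * Y) * X) + (X * X) * Y)
                  (tmap D0 id w))
       (D1 a)
   = smap
       (fun w : FV (Y * X)%type =>
          relabel (fun p : Y * (X * X) =>
                     inl (inl ((p.1, p.2.1), p.2.2)) : ((Y * X) * X + (X * Y) * X) + (X * X) * Y)
                  (tmap id D0 w))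
       (fun w : FV (X * Y)%type =>
          relabel (fun p : X * ((Y * X) + (X * Y)) =>
                     match p with
                     | (x, inl (y, x')) => inl (inr ((x, y), x'))
                     | (x, inr (x', y)) => inr ((x, x'), y)
                     end : ((Y * X) * X + (X * Y) * X) + (X * X) * Y)
                  (tmap id D1 w))
       (D1 a);
  (* D1 is an H-bimodule map, H acting on U(x)H + H(x)U through D0 *)
  D1_lact : forall h a,
     D1 (lact h a) =
     lin2 (fun (p : X * X) (q : (Y * X) + (X * Y)) =>
             match q with
             | inl (y, x) => inl_v _ (tens (lact (bv p.1) (bv y)) (mul (bv p.2) (bv x)))
             | inr (x, y) => inr_v _ (tens (mul (bv p.1) (bv x)) (lact (bv p.2) (bv y)))
             end) (D0 h) (D1 a);
  D1_ract : forall a h,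
     D1 (ract a h) =
     lin2 (fun (q : (Y * X) + (X * Y)) (p : X * X) =>
             match q with
             | inl (y, x) => inl_v _ (tens (ract (bv y) (bv p.1)) (mul (bv x) (bv p.2)))
             | inr (x, y) => inr_v _ (tens (mul (bv x) (bv p.1)) (ract (bv y) (bv p.2)))
             end) (D1 a) (D0 h);
  (* Delta is a morphism in LM:  D0 o f = (f (x) Id + Id (x) f) o D1 *)
  D_f : forall a, D0 (f a) = smap (tmap f id) (tmap id f) (D1 a)
}.

End LM.

Section Graph.
Variables (G A : choiceType) (s t : A -> G)
  (m : G -> G -> G) (l : G -> A -> A) (r : A -> G -> A).

Definition kG_mul : FV G -> FV G -> FV G := lin2 (fun g h => bv (m g h)).
Definition kA_lact : FV G -> FV A -> FV A := lin2 (fun g a => bv (l g a)).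
Definition kA_ract : FV A -> FV G -> FV A := lin2 (fun a g => bv (r a g)).
Definition phi_map : FV A -> FV G := lin1 (fun a => bv (t a) - bv (s a)).
Definition Delta0 : FV G -> FV (G * G)%type := lin1 (fun g => bv (g, g)).
Definition Delta1 : FV A -> FV ((A * G) + (G * A))%type :=
  lin1 (fun a => bv (inl (a, t a)) + bv (inr (s a, a))).

End Graph.

End FreeSpaces.

(* Every structure map is the linear or bilinear extension of a map on basis
   elements, and two linear maps out of a free space agree as soon as they agree
   on the basis.  Each axiom of an LM-bialgebra therefore only has to be checked
   on basis elements.  There, the algebra and bimodule axioms and the
   equivariance of phi and Delta1 are literally the axioms of the multiplicative
   graph (associativity of mu, and compatibility of s and t with mu), while the
   coassociativity of Delta1 and the compatibility of Delta with phi are the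
   identities
     (a (x) t a + s a (x) a) (x) t a + s a (x) s a (x) a
       = a (x) t a (x) t a + s a (x) (a (x) t a + s a (x) a),
     t a (x) t a - s a (x) s a = (t a - s a) (x) t a + s a (x) (t a - s a). *)

From HB Require Import structures.
From mathcomp Require Import all_boot all_algebra.
From mathcomp Require Import finmap.
From mathcomp.multinomials Require Import monalg.

Set Implicit Arguments.
Unset Strict Implicit.
Unset Printing Implicit Defensive.
Import GRing.Theory.
Local Open Scope ring_scope.

Section LinearExtension.
Variable k : fieldType.
Local Notation FV K := {malg k[K]}.

Section IsLinear.
Variables (V W : lmodType k) (F : V -> W).
Hypothesis linF : is_linear F.

Lemma is_linearZ (c : k) : {morph F : u / c *: u}.
Proof. exact: (@scalable_linear _ _ _ *:%R). Qed.

Lemma is_linear0 : F 0 = 0.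
Proof. by have := is_linearZ 0 0; rewrite !scale0r. Qed.

Lemma is_linearD : {morph F : u v / u + v}.
Proof. by move=> u v; rewrite -[u in LHS]scale1r linF scale1r. Qed.

Lemma is_linearN : {morph F : u / - u}.
Proof. by move=> u; rewrite -scaleN1r is_linearZ scaleN1r. Qed.

End IsLinear.

Lemma comp_is_linear (U V W : lmodType k) (F : V -> W) (G : U -> V) :
  is_linear F -> is_linear G -> is_linear (fun x => F (G x)).
Proof. by move=> linF linG c u v; rewrite linG linF. Qed.

Lemma malgU_bv (K : choiceType) (c : k) (x : K) : << c *g x >> = c *: bv k x.
Proof. by apply/malgP => y; rewrite mcoeffZ !mcoeffU mulr_natr. Qed.

Lemma lin_ext (K : choiceType) (V : lmodType k) (F G : FV K -> V) :
  is_linear F -> is_linear G -> (forall x, F (bv k x) = G (bv k x)) -> F =1 G.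
Proof.
move=> linF linG FG u; rewrite (monalgE u).
rewrite (big_morph F (is_linearD linF) (is_linear0 linF)).
rewrite (big_morph G (is_linearD linG) (is_linear0 linG)).
by apply: eq_bigr => x _; rewrite malgU_bv (is_linearZ linF) (is_linearZ linG) FG.
Qed.

Section Lin1.
Variables (K : choiceType) (V : lmodType k).

Lemma lin1Ew (h : K -> V) (u : FV K) (d : {fset K}) :
  (msupp u `<=` d)%fset -> lin1 h u = \sum_(x <- d) u@_x *: h x.
Proof.
move=> le_ud; rewrite /lin1 [LHS](big_fset_incl _ le_ud) => //= x _.
by move/mcoeff_outdom ->; rewrite scale0r.
Qed.

Lemma lin1_is_linear (h : K -> V) : is_linear (lin1 h).
Proof.
move=> c u v; pose d := (msupp u `|` msupp v `|` msupp (c *: u + v))%fset.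
have sub_u : (msupp u `<=` d)%fset by rewrite /d -fsetUA fsubsetUl.
have sub_v : (msupp v `<=` d)%fset by rewrite /d fsetUC fsetUA fsubsetUr.
have sub_cuv : (msupp (c *: u + v) `<=` d)%fset by rewrite /d fsubsetUr.
rewrite (lin1Ew _ sub_u) (lin1Ew _ sub_v) (lin1Ew _ sub_cuv) scaler_sumr -big_split.
by apply: eq_bigr => x _; rewrite mcoeffD mcoeffZ scalerDl scalerA.
Qed.

Lemma lin1_bv (h : K -> V) (x : K) : lin1 h (bv k x) = h x.
Proof. by rewrite (lin1Ew _ msuppU_le) big_seq_fset1 mcoeffUU scale1r. Qed.

Lemma eq_lin1 (h1 h2 : K -> V) (u : FV K) : h1 =1 h2 -> lin1 h1 u = lin1 h2 u.
Proof. by move=> eq_h; apply: eq_bigr => x _; rewrite eq_h. Qed.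

Lemma lin1_comb (c : k) (h1 h2 : K -> V) (u : FV K) :
  lin1 (fun x => c *: h1 x + h2 x) u = c *: lin1 h1 u + lin1 h2 u.
Proof.
rewrite /lin1 scaler_sumr -big_split.
by apply: eq_bigr => x _; rewrite scalerDr !scalerA mulrC.
Qed.

Lemma lin1D (h : K -> V) : {morph lin1 h : u v / u + v}.
Proof. exact: is_linearD (lin1_is_linear h). Qed.

Lemma lin1N (h : K -> V) : {morph lin1 h : u / - u}.
Proof. exact: is_linearN (lin1_is_linear h). Qed.

End Lin1.

Section Lin2.
Variables (K1 K2 : choiceType) (V : lmodType k) (h : K1 -> K2 -> V).

Lemma lin2_linearl (v : FV K2) : is_linear (fun u => lin2 h u v).
Proof. exact: lin1_is_linear. Qed.

Lemma lin2_linearr (u : FV K1) : is_linear (lin2 h u).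
Proof.
move=> c v w; rewrite /lin2 -lin1_comb.
by apply: eq_lin1 => x; rewrite lin1_is_linear.
Qed.

Lemma lin2_is_bilinear : is_bilinear (lin2 h).
Proof. by split; [apply: lin2_linearl | apply: lin2_linearr]. Qed.

Lemma lin2_bv (x : K1) (y : K2) : lin2 h (bv k x) (bv k y) = h x y.
Proof. by rewrite /lin2 !lin1_bv. Qed.

Lemma lin2Dl (v : FV K2) : {morph lin2 h ^~ v : u u' / u + u'}.
Proof. exact: is_linearD (lin2_linearl v). Qed.

Lemma lin2Nl (v : FV K2) : {morph lin2 h ^~ v : u / - u}.
Proof. exact: is_linearN (lin2_linearl v). Qed.

Lemma lin2Dr (u : FV K1) : {morph lin2 h u : v v' / v + v'}.
Proof. exact: is_linearD (lin2_linearr u). Qed.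

Lemma lin2Nr (u : FV K1) : {morph lin2 h u : v / - v}.
Proof. exact: is_linearN (lin2_linearr u). Qed.

End Lin2.

End LinearExtension.

Ltac unfold_maps :=
  rewrite /kG_mul /kA_lact /kA_ract /phi_map /Delta0 /Delta1
          /tmap /smap /relabel /inl_v /inr_v /tens.

Ltac prove_linear :=
  unfold_maps;
  repeat first [ apply: lin1_is_linear | apply: lin2_linearl
               | apply: lin2_linearr | apply: comp_is_linear ].

(* Replaces, via lin_ext, every vector of the context by a basis vector, then
   evaluates all the linear extensions on these basis vectors. *)
Ltac on_basis :=
  repeat match goal with v : {malg _[_]} |- _ =>
    move: v; apply: lin_ext; [prove_linear | prove_linear | move=> v]
  end;
  repeat (unfold_maps;
          rewrite ?lin1_bv ?lin2_bv ?lin1D ?lin1N ?lin2Dl ?lin2Dr ?lin2Nl ?lin2Nr /=).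

Theorem mainTheorem7 (k : fieldType) (char0 : [pchar k]%R =i pred0)
    (G A : choiceType) (s t : A -> G)
    (m : G -> G -> G) (l : G -> A -> A) (r : A -> G -> A) :
  multiplicative_graph s t m l r ->
  LM_bialgebra (kG_mul (k:=k) m) (kA_lact (k:=k) l) (kA_ract (k:=k) r)
    (phi_map (k:=k) s t) (Delta0 (k:=k) (G:=G)) (Delta1 (k:=k) s t).
Proof.
move=> [mA [lact_st [ract_st [ractA [lractA lactA]]]]].
split; try exact: lin1_is_linear; try exact: lin2_is_bilinear.
- by move=> x y z; on_basis; rewrite mA.
- by move=> x y z; on_basis; rewrite lactA.
- by move=> x y z; on_basis; rewrite ractA.
- by move=> x y z; on_basis; rewrite lractA.
- by move=> x y; on_basis; case: (lact_st x y) => -> ->.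
- by move=> x y; on_basis; case: (ract_st x y) => -> ->.
- by move=> x; on_basis.
- by move=> x y; on_basis.
- by move=> x; on_basis; rewrite addrA.
- by move=> x y; on_basis; case: (lact_st x y) => -> ->.
- by move=> x y; on_basis; case: (ract_st x y) => -> ->.
- by move=> x; on_basis; rewrite addrA subrK.
Qed.
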